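(* Let $G$ be a finite, connected, simple, bridgeless, triangle-free cubic graph and let $\Lambda$ be a valid labeling of $\mathfrak{L}_2(G)$ such that no reduced clique is a self-intersection of any cycle in $\Gamma_\Lambda$. Then for every $\gamma\in\Gamma_\Lambda$ the projected walk $W_\gamma$ is a cycle of $G$.
   Context: $\mathcal{L}(H)$ is the line graph of $H$. Let $\mathcal{T}$ be the set of triangles of $\mathcal{L}(\mathcal{L}(G))$ formed by the three edges of a triangle of $\mathcal{L}(G)$. $\mathfrak{L}_2(G)$ has the vertex set of $\mathcal{L}(\mathcal{L}(G))$ and the edges of $\mathcal{L}(\mathcal{L}(G))$ not in any triangle of $\mathcal{T}$. For each edge $e$ of $G$, the reduced clique $\mathbb{X}_e$ is the subgraph of $\mathfrak{L}_2(G)$ on the four edges of $\mathcal{L}(G)$ incident to $e$, with all edges of $\mathfrak{L}_2(G)$ among them (a 4-cycle). A labeling $\Lambda$ gives each edge of $\mathfrak{L}_2(G)$ a label in $\{0,1\}$ ($1$ = open); it is valid if in every reduced clique each vertex is incident to two edges of that clique with different labels. $\Gamma_\Lambda$ is the set of connected components (cycles) of the subgraph formed by open edges. A reduced clique $\mathbb{X}$ is a self-intersection of $\gamma\in\Gamma_\Lambda$ if both open edges of $\mathbb{X}$ lie on $\gamma$. Projected walk: each vertex $f$ of $\mathfrak{L}_2(G)$ is an unordered pair of distinct edges of $G$ sharing an endpoint; if $\gamma$ has vertices $f_1,\dots,f_m$ in cyclic order, consecutive $f_j,f_{j+1}$ (indices mod $m$) share exactly one edge $e_j$ of $G$, and $W_\gamma$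 is the cyclic sequence $(e_1,\dots,e_m)$. *)

From mathcomp Require Import all_boot.
Set Implicit Arguments.
Unset Strict Implicit.
Unset Printing Implicit Defensive.

Section Defs.
Variable V : finType.
Variable adj : rel V.

Definition simple_graph := symmetric adj /\ irreflexive adj.
Definition connected_graph := forall x y : V, connect adj x y.
Definition cubic := forall x : V, #|[set y | adj x y]| = 3.
Definition triangle_free := forall x y z : V, ~ [&& adj x y, adj y z & adj x z].
Definition bridgeless := forall x y : V, adj x y ->
  connect (fun a b => adj a b && ([set a; b] != [set x; y])) x y.

Definition edgeG (e : {set V}) : bool :=
  [exists x, exists y, adj x y && (e == [set x; y])].

Definition LG_adj (e e' : {set V}) : bool :=
  [&& edgeG e, edgeG e', e != e' & e :&: e' != set0].

(** Vertices of L(L(G)) = edges of L(G) = pairs {e,e'} with e, e' adjacent in L(G). *)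
Definition LLv (f : {set {set V}}) : bool :=
  [exists e, exists e', LG_adj e e' && (f == [set e; e'])].

Definition LLG_adj (f f' : {set {set V}}) : bool :=
  [&& LLv f, LLv f', f != f' & f :&: f' != set0].

(** The edge {f,f'} of L(L(G)) lies in a triangle of T, i.e. in the triangle of
    L(L(G)) formed by the three edges of some triangle {e1,e2,e3} of L(G). *)
Definition in_T_triangle (f f' : {set {set V}}) : bool :=
  [exists e1, exists e2, exists e3,
     [&& LG_adj e1 e2, LG_adj e2 e3, LG_adj e1 e3,
         f \in [set [set e1; e2]; [set e2; e3]; [set e1; e3]] &
         f' \in [set [set e1; e2]; [set e2; e3]; [set e1; e3]]]].

Definition L2adj (f f' : {set {set V}}) : bool :=
  LLG_adj f f' && ~~ in_T_triangle f f'.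

(** Vertex set of the reduced clique X_e: the edges of L(G) incident to e.
    Its edges are all edges of L_2(G) between these vertices. *)
Definition Xv (e : {set V}) : {set {set {set V}}} := [set f | LLv f && (e \in f)].

(** A labeling assigns a label to each edge {f,f'} of L_2(G) (true = 1 = open). *)
Definition labeling := {set {set {set V}}} -> bool.

Definition open_edge (L : labeling) (f f' : {set {set V}}) : bool :=
  L2adj f f' && L [set f; f'].

Definition valid_labeling (L : labeling) :=
  forall e, edgeG e -> forall f, f \in Xv e ->
    exists g1 g2, [/\ g1 \in Xv e, g2 \in Xv e, L2adj f g1, L2adj f g2 &
                      L [set f; g1] != L [set f; g2]].

(** Gamma_L: connected components of the subgraph formed by open edges,
    represented by their vertex sets. *)
Definition component (L : labeling) (f : {set {set V}}) : {set {set {set V}}} :=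
  [set g | connect (open_edge L) f g].

Definition in_Gamma (L : labeling) (C : {set {set {set V}}}) :=
  exists f, (exists g, open_edge L f g) /\ C = component L f.

Definition self_intersection (L : labeling) (e : {set V}) (C : {set {set {set V}}}) :=
  exists f1 g1 f2 g2,
    [/\ [&& f1 \in Xv e, g1 \in Xv e, f2 \in Xv e & g2 \in Xv e],
        open_edge L f1 g1, open_edge L f2 g2,
        [set f1; g1] != [set f2; g2] &
        [&& f1 \in C, g1 \in C, f2 \in C & g2 \in C]].

Definition cyclic_order (L : labeling) (C : {set {set {set V}}}) (s : seq {set {set V}}) :=
  [/\ uniq s, (forall f, (f \in s) = (f \in C)) & cycle (open_edge L) s].

Definition shared_edge (f f' : {set {set V}}) : {set V} :=
  odflt set0 [pick e in f :&: f'].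

Definition projected_walk (s : seq {set {set V}}) : seq {set V} :=
  [seq shared_edge p.1 p.2 | p <- zip s (rot 1 s)].

Definition is_cycle_of_G (W : seq {set V}) :=
  exists vs : seq V,
    [/\ size vs = size W, 3 <= size vs, uniq vs, cycle adj vs &
        W = [seq [set p.1; p.2] | p <- zip vs (rot 1 vs)]].

End Defs.

From mathcomp Require Import all_boot.
Set Implicit Arguments.
Unset Strict Implicit.
Unset Printing Implicit Defensive.

(* Write f_1, ..., f_m for the vertices of the cycle gamma. Each f_j is a pair of
   adjacent edges of G and so has a corner, the vertex of G they share. The edge
   e_j of G shared by f_j and f_{j+1} joins their corners, which differ: otherwise
   the three edges of G in f_j and f_{j+1} would form a triangle of L(G), and the
   edge f_j f_{j+1} would lie in a triangle of T, which L_2(G) omits. Hence the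
   corners trace a closed walk of G with edge sequence W_gamma. It is a cycle:
   e_i = e_j would make X_{e_i} a self-intersection of gamma, and two distinct
   non-consecutive f_i, f_j with the same corner v would give four distinct edges
   e_{i-1}, e_i, e_{j-1}, e_j at v, against cubicity. Validity gives every f two
   distinct open neighbours, so gamma has at least three vertices. *)

Lemma rot1_fcycle (T : eqType) (f : T -> T) (s : seq T) :
  fcycle f s -> rot 1 s = map f s.
Proof.
case: s => // x t; rewrite rot1_cons /=.
elim: t {1 4}x => [|z t IHt] y /=; first by rewrite andbT => /eqP->.
by case/andP=> /eqP-> /IHt->.
Qed.

Lemma next_next_neq (T : finType) (s : seq T) x :
  uniq s -> 3 <= size s -> x \in s -> next s (next s x) != x.
Proof.
move=> Us s_ge3 xs; apply/eqP => nnx.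
have := orbit_uniq (next s) x; rewrite /orbit (order_cycle (cycle_next Us) Us xs).
by case: (size s) s_ge3 => [|[|[|n]]] //= _; rewrite nnx !inE eqxx orbT.
Qed.

Lemma eq_set2_mem (T : finType) (x y a b : T) :
  a \in [set x; y] -> b \in [set x; y] -> a != b -> [set x; y] = [set a; b].
Proof.
by rewrite !inE => /orP[]/eqP-> /orP[]/eqP->; rewrite ?eqxx // setUC.
Qed.

Section LineGraphs.
Variables (V : finType) (adj : rel V).
Implicit Types (x y v : V) (a b e : {set V}) (f g : {set {set V}}).

Lemma edgeGP e : edgeG adj e -> exists x y, adj x y /\ e = [set x; y].
Proof. by case/existsP=> x /existsP[y /andP[xy /eqP ->]]; exists x, y. Qed.

Lemma LLvP f : LLv adj f -> exists a b, LG_adj adj a b /\ f = [set a; b].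
Proof. by case/existsP=> a /existsP[b /andP[ab /eqP ->]]; exists a, b. Qed.

Lemma LG_adj_common_vertex v a b :
  edgeG adj a -> edgeG adj b -> a != b -> v \in a -> v \in b -> LG_adj adj a b.
Proof.
move=> ea eb ab va vb; rewrite /LG_adj ea eb ab; apply/set0Pn.
by exists v; rewrite inE va vb.
Qed.

Lemma LLv_edgeG f a : LLv adj f -> a \in f -> edgeG adj a.
Proof.
by case/LLvP=> [b [c [/and4P[eb ec _ _] ->]]]; rewrite !inE => /orP[]/eqP->.
Qed.

Lemma LLv_set2 f a b : LLv adj f -> a \in f -> b \in f -> a != b -> f = [set a; b].
Proof. by case/LLvP=> [c [d [_ ->]]]; apply: eq_set2_mem. Qed.

Lemma LLv_other f a : LLv adj f -> a \in f -> exists2 b, b != a & f = [set b; a].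
Proof.
move=> Lf af; have [b bf ba] : exists2 b, b \in f & b != a.
  have [c [d [/and4P[_ _ cd _] Ef]]] := LLvP Lf.
  have [ca|ca] := eqVneq c a; last by exists c; rewrite // Ef setU11.
  by exists d; rewrite ?Ef ?setU11 ?inE ?eqxx ?orbT // -ca eq_sym.
by exists b; last exact: LLv_set2.
Qed.

Lemma shared_edge_in f g : f :&: g != set0 -> shared_edge f g \in f :&: g.
Proof.
by case/set0Pn=> a af; rewrite /shared_edge; case: pickP => // /(_ a); rewrite af.
Qed.

Lemma L2adj_shared_edge f g : L2adj adj f g -> shared_edge f g \in f :&: g.
Proof. by case/andP=> /and4P[_ _ _ /shared_edge_in]. Qed.

Variable v0 : V.

(* The vertex shared by the two edges of G in [f]; [v0] is a junk default,
   never returned when [LLv adj f]. *)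
Definition corner f : V := odflt v0 [pick v in \bigcap_(a in f) a].

Lemma corner_in f a : LLv adj f -> a \in f -> corner f \in a.
Proof.
move=> Lf af; suff /bigcapP : corner f \in \bigcap_(b in f) b by apply.
rewrite /corner; case: pickP => [//|none].
have [b [c [/and4P[_ _ _ /set0Pn[v /setIP[vb vc]]] Ef]]] := LLvP Lf.
have : v \in \bigcap_(x in f) x by apply/bigcapP => x; rewrite Ef !inE => /orP[]/eqP->.
by rewrite none.
Qed.

Lemma L2adj_corner_neq f g : L2adj adj f g -> corner f != corner g.
Proof.
move=> fg; have /setIP[ef eg] := L2adj_shared_edge fg.
case/andP: fg => /and4P[Lf Lg f_g _] notT; set e := shared_edge f g in ef eg.
have [a ae Ef] := LLv_other Lf ef; have [b be Eg] := LLv_other Lg eg.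
apply: contra notT => /eqP same_corner.
have va : corner f \in a by apply: corner_in; rewrite // Ef setU11.
have ve : corner f \in e by apply: corner_in.
have vb : corner f \in b by rewrite same_corner; apply: corner_in; rewrite // Eg setU11.
have ab : a != b by apply: contraNneq f_g => ab; rewrite Ef Eg ab.
have ea : edgeG adj a by apply: (LLv_edgeG Lf); rewrite Ef setU11.
have eb : edgeG adj b by apply: (LLv_edgeG Lg); rewrite Eg setU11.
have ee : edgeG adj e by apply: LLv_edgeG ef.
apply/existsP; exists a; apply/existsP; exists e; apply/existsP; exists b.
rewrite !(LG_adj_common_vertex (v := corner f)) // 1?eq_sym //.
by rewrite Ef Eg [[set b; e]]setUC !inE !eqxx !orbT.
Qed.

Hypothesis adj_sym : symmetric adj.

Lemma edgeG_set2 e x y :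
  edgeG adj e -> x \in e -> y \in e -> x != y -> e = [set x; y] /\ adj x y.
Proof.
case/edgeGP=> [u [w [uw ->]]] xe ye xy; split; first exact: eq_set2_mem.
move: xe ye xy; rewrite !inE => /orP[]/eqP-> /orP[]/eqP->; rewrite ?eqxx //.
by rewrite adj_sym.
Qed.

Lemma shared_edge_corners f g : L2adj adj f g ->
  shared_edge f g = [set corner f; corner g] /\ adj (corner f) (corner g).
Proof.
move=> fg; have /setIP[ef eg] := L2adj_shared_edge fg.
have /andP[/and4P[Lf Lg _ _] _] := fg.
apply: edgeG_set2; [exact: LLv_edgeG ef | exact: corner_in | exact: corner_in |].
exact: L2adj_corner_neq.
Qed.

Lemma edges_at_size v es : cubic adj -> uniq es ->
  all (fun e => edgeG adj e && (v \in e)) es -> size es <= 3.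
Proof.
move=> adj_cubic Ues /allP es_at; rewrite -(card_uniqP Ues) -(adj_cubic v).
apply: leq_trans (leq_imset_card (fun y => [set v; y]) _).
apply/subset_leq_card/subsetP => e /es_at/andP[/edgeGP[x [y [xy ->]]]].
rewrite !inE => /orP[]/eqP->; apply/imsetP.
  by exists y; rewrite ?inE.
by exists x; rewrite ?inE 1?adj_sym // setUC.
Qed.

End LineGraphs.

Section Labelings.
Variables (V : finType) (adj : rel V) (L : labeling V).
Implicit Types (e : {set V}) (f g : {set {set V}}).

Lemma open_edge_LLv f g : open_edge adj L f g -> LLv adj f /\ LLv adj g.
Proof. by case/andP=> /andP[/and4P[]]. Qed.

Lemma open_edge_neq f g : open_edge adj L f g -> f != g.
Proof. by case/andP=> /andP[/and4P[]]. Qed.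

Hypothesis L_valid : valid_labeling adj L.

Lemma open_edge_in_clique e f :
  edgeG adj e -> f \in Xv adj e -> exists2 h, h \in Xv adj e & open_edge adj L f h.
Proof.
move=> ee fX; have [g1 [g2 [X1 X2 fg1 fg2]]] := L_valid ee fX.
rewrite /open_edge; case E1: (L [set f; g1]); case E2: (L [set f; g2]) => //= _.
  by exists g1; rewrite ?fg1 ?E1.
by exists g2; rewrite ?fg2 ?E2.
Qed.

Lemma component_card_ge3 C : in_Gamma adj L C -> 3 <= #|C|.
Proof.
move=> [f [[g fg] ->]].
have /setIP[ef eg] := L2adj_shared_edge (andP fg).1.
have [Lf Lg] := open_edge_LLv fg; have f_g := open_edge_neq fg.
set e := shared_edge f g in ef eg.
have [a ae Ef] := LLv_other Lf ef.
have af : a \in f by rewrite Ef setU11.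
have fXa : f \in Xv adj a by rewrite inE Lf af.
have [h /setIdP[_ ah] fh] := open_edge_in_clique (LLv_edgeG Lf af) fXa.
have f_h := open_edge_neq fh.
have g_h : g != h.
  by apply: contraNneq f_g => gh; rewrite Ef (LLv_set2 Lg _ eg ae) // gh.
have Ufgh : uniq [:: f; g; h] by rewrite /= !inE negb_or f_g f_h g_h.
rewrite -[3](card_uniqP Ufgh); apply/subset_leq_card/subsetP => x.
by rewrite !inE => /or3P[]/eqP->; rewrite ?connect0 ?connect1.
Qed.

End Labelings.

Section ProjectedWalk.
Variables (V : finType) (adj : rel V) (v0 : V).
Hypotheses (adj_sym : symmetric adj) (adj_cubic : cubic adj).
Variables (L : labeling V) (C : {set {set {set V}}}) (s : seq {set {set V}}).
Hypotheses (L_valid : valid_labeling adj L) (C_Gamma : in_Gamma adj L C).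
Hypothesis C_no_self : forall e, edgeG adj e -> ~ self_intersection adj L e C.
Hypothesis s_C : cyclic_order adj L C s.

Let s_uniq : uniq s. Proof. by case: s_C. Qed.
Let s_cycle : cycle (open_edge adj L) s. Proof. by case: s_C. Qed.
Let mem_s f : (f \in s) = (f \in C). Proof. by case: s_C. Qed.

Local Notation corner := (corner v0).

Lemma cyclic_order_size_ge3 : 3 <= size s.
Proof. by rewrite -(card_uniqP s_uniq) (eq_card mem_s) (component_card_ge3 L_valid). Qed.

Lemma open_edge_next f : f \in s -> open_edge adj L f (next s f).
Proof. exact: next_cycle. Qed.

Lemma open_edge_prev f : f \in s -> open_edge adj L (prev s f) f.
Proof. exact: prev_cycle. Qed.

Definition walk_edge f := shared_edge f (next s f).

Lemma walk_edge_in f : f \in s -> walk_edge f \in f :&: next s f.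
Proof. by move/open_edge_next/andP=> [/L2adj_shared_edge]. Qed.

Lemma walk_edge_edgeG f : f \in s -> edgeG adj (walk_edge f).
Proof.
move=> fs; have /setIP[ef _] := walk_edge_in fs.
by have [Lf _] := open_edge_LLv (open_edge_next fs); apply: LLv_edgeG ef.
Qed.

Lemma walk_edge_inj : {in s &, injective walk_edge}.
Proof.
move=> f g fs gs same_edge; have [//|f_g] := eqVneq f g; exfalso.
have /setIP[ef enf] := walk_edge_in fs; have /setIP[eg eng] := walk_edge_in gs.
have [Lf Lnf] := open_edge_LLv (open_edge_next fs).
have [Lg Lng] := open_edge_LLv (open_edge_next gs).
apply: (C_no_self (walk_edge_edgeG fs)).
exists f, (next s f), g, (next s g); split; rewrite ?open_edge_next //.
- by rewrite !inE Lf Lnf Lg Lng ef enf same_edge eg eng.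
- apply/eqP => E; have : g \in [set f; next s f] by rewrite E setU11.
  have : f \in [set g; next s g] by rewrite -E setU11.
  rewrite !inE => /orP[/eqP fg|/eqP fE]; first by rewrite fg eqxx in f_g.
  case/orP=> [/eqP gf|/eqP gE]; first by rewrite gf eqxx in f_g.
  by have := next_next_neq s_uniq cyclic_order_size_ge3 fs; rewrite -gE -fE eqxx.
- by rewrite -!mem_s !mem_next fs gs.
Qed.

Lemma corner_walk_edges f : f \in s ->
  corner f \in walk_edge f /\ corner f \in walk_edge (prev s f).
Proof.
move=> fs; have /setIP[ef _] := walk_edge_in fs.
have pfs : prev s f \in s by rewrite mem_prev.
have /setIP[_ epf] := walk_edge_in pfs; rewrite next_prev // in epf.
have [Lf _] := open_edge_LLv (open_edge_next fs).
by split; apply: (corner_in _ Lf).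
Qed.

Lemma corner_next_neq f : f \in s -> corner (next s f) != corner f.
Proof. by move/open_edge_next/andP=> [/L2adj_corner_neq]; rewrite eq_sym. Qed.

Lemma corner_inj : {in s &, injective corner}.
Proof.
move=> f g fs gs same_corner; have [//|f_g] := eqVneq f g; exfalso.
have pf_f := open_edge_neq (open_edge_prev fs).
have pg_g := open_edge_neq (open_edge_prev gs).
have pf_pg : prev s f != prev s g by rewrite (inj_eq (can_inj (next_prev s_uniq))).
have pf_g : prev s f != g.
  apply: contraTneq (corner_next_neq gs) => /(congr1 (next s)).
  by rewrite next_prev // => <-; rewrite same_corner eqxx.
have f_pg : f != prev s g.
  apply: contraTneq (corner_next_neq fs) => /(congr1 (next s)).
  by rewrite next_prev // => ->; rewrite same_corner eqxx.
have U : uniq [:: prev s f; f; prev s g; g].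
  by rewrite /= !inE !negb_or pf_f pf_pg pf_g f_pg f_g pg_g.
have sub : {subset [:: prev s f; f; prev s g; g] <= s}.
  by move=> x; rewrite !inE => /or4P[]/eqP->; rewrite ?mem_prev.
suff : size (map walk_edge [:: prev s f; f; prev s g; g]) <= 3 by [].
apply: (edges_at_size (v := corner f) adj_sym adj_cubic).
  by rewrite (map_inj_in_uniq (sub_in2 sub walk_edge_inj)).
have [[ef epf] [eg epg]] := (corner_walk_edges fs, corner_walk_edges gs).
rewrite -same_corner in eg epg; rewrite /= ef epf eg epg !andbT.
by rewrite !walk_edge_edgeG ?mem_prev.
Qed.

Lemma projected_walkE : projected_walk s = map walk_edge s.
Proof.
rewrite /projected_walk (rot1_fcycle (cycle_next s_uniq)) -{1}(map_id s).
by rewrite zip_map -map_comp.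
Qed.

Lemma projected_walk_cycle : is_cycle_of_G adj (projected_walk s).
Proof.
exists (map corner s); split.
- by rewrite projected_walkE !size_map.
- by rewrite size_map cyclic_order_size_ge3.
- by rewrite (map_inj_in_uniq corner_inj).
- rewrite cycle_map; apply: sub_cycle s_cycle => f g /andP[fg _].
  exact: (shared_edge_corners v0 adj_sym fg).2.
- rewrite projected_walkE -map_rot (rot1_fcycle (cycle_next s_uniq)) -map_comp.
  rewrite zip_map -map_comp; apply/eq_in_map => f /open_edge_next/andP[fg _].
  exact: (shared_edge_corners v0 adj_sym fg).1.
Qed.

End ProjectedWalk.

Theorem lemma2p16 (V : finType) (adj : rel V)
  (Hsimple : simple_graph adj) (Hconn : connected_graph adj)
  (Hbridge : bridgeless adj) (Htri : triangle_free adj) (Hcubic : cubic adj)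
  (L : labeling V) (Hvalid : valid_labeling adj L)
  (Hnoself : forall e C, edgeG adj e -> in_Gamma adj L C -> ~ self_intersection adj L e C) :
  forall C, in_Gamma adj L C ->
  forall s, cyclic_order adj L C s -> is_cycle_of_G adj (projected_walk s).
Proof.
move=> C HC s Hs; have [adj_sym _] := Hsimple.
have [f [[g /open_edge_LLv[/LLvP[a [b [/and4P[/edgeGP[v0 _] _ _ _] _]]] _]] _]] := HC.
apply: (projected_walk_cycle v0 adj_sym Hcubic Hvalid HC _ Hs) => e ee.
exact: Hnoself ee HC.
Qed.
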